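(* Let $0<\alpha_i\le\beta_i$ for $i=1,\ldots,n$, $\alpha:=\sum_{i=1}^n\alpha_i$ and $\beta:=\sum_{i=1}^n\beta_i$. (i) If $\psi\in\Psi_n$, then $\alpha\,\psi\left(\frac{\alpha_1}{\alpha},\ldots,\frac{\alpha_n}{\alpha}\right)\le\beta\,\psi\left(\frac{\beta_1}{\beta},\ldots,\frac{\beta_n}{\beta}\right)$. (ii) If $\psi\in\Psi_n^{\rm sc}$ and $\alpha_i<\beta_i$ for some $i\in\{1,\ldots,n\}$, then this inequality is strict.
   Context: $n\ge2$ is an integer. $\Omega_n:=\{(t_1,\ldots,t_n)\in\mathbb{R}^n: t_1,\ldots,t_n\ge0,\ t_1+\cdots+t_n=1\}$ and $\Omega_n^\circ:=\{t\in\Omega_n: t_1,\ldots,t_n<1\}$; $\mathbf{e}_i$ denotes the $i$th standard unit vector of $\mathbb{R}^n$. $\Psi_n$ is the class of all convex continuous functions $\psi:\Omega_n\to\mathbb{R}$ such that (B1) $\psi(\mathbf{e}_1)=\cdots=\psi(\mathbf{e}_n)=1$, and (B2) for every $t\in\Omega_n^\circ$ and every $i$: $\psi(t)\ge(1-t_i)\,\psi\left(\frac{t_1}{1-t_i},\ldots,\frac{t_{i-1}}{1-t_i},0,\frac{t_{i+1}}{1-t_i},\ldots,\frac{t_n}{1-t_i}\right)$. $\Psi_n^{\rm sc}$ is the subclass of strictly convex members of $\Psi_n$. *)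

From HB Require Import structures.
From mathcomp Require Import all_boot all_order all_algebra.
From mathcomp Require Import all_classical all_reals all_analysis.
Set Implicit Arguments. Unset Strict Implicit. Unset Printing Implicit Defensive.
Import Order.TTheory GRing.Theory Num.Theory.
Import numFieldNormedType.Exports.
Local Open Scope classical_set_scope.
Local Open Scope ring_scope.

Section Defs.
Variables (R : realType) (n : nat).

Definition Omega : set 'rV[R]_n :=
  [set t | (forall i, 0 <= t ord0 i) /\ \sum_(i < n) t ord0 i = 1].

Definition Omega_circ : set 'rV[R]_n :=
  [set t | Omega t /\ forall i, t ord0 i < 1].

Definition unitv (i : 'I_n) : 'rV[R]_n := \row_j (j == i)%:R.

Definition dropcoord (t : 'rV[R]_n) (i : 'I_n) : 'rV[R]_n :=
  \row_j (if j == i then 0 else t ord0 j / (1 - t ord0 i)).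

Definition convex_on (A : set 'rV[R]_n) (psi : 'rV[R]_n -> R) :=
  forall s t, A s -> A t -> forall l : R, 0 <= l <= 1 ->
    psi (l *: s + (1 - l) *: t) <= l * psi s + (1 - l) * psi t.

Definition strictly_convex_on (A : set 'rV[R]_n) (psi : 'rV[R]_n -> R) :=
  forall s t, A s -> A t -> s != t -> forall l : R, 0 < l < 1 ->
    psi (l *: s + (1 - l) *: t) < l * psi s + (1 - l) * psi t.

(* membership in Psi_n (psi is only relevant on Omega_n) *)
Definition in_Psi (psi : 'rV[R]_n -> R) :=
  [/\ convex_on Omega psi,
      {within Omega, continuous psi},
      (forall i, psi (unitv i) = 1) &
      (forall t, Omega_circ t -> forall i,
         (1 - t ord0 i) * psi (dropcoord t i) <= psi t)].

Definition in_Psi_sc (psi : 'rV[R]_n -> R) :=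
  in_Psi psi /\ strictly_convex_on Omega psi.

End Defs.

From HB Require Import structures.
From mathcomp Require Import all_boot all_order all_algebra.
From mathcomp Require Import all_classical all_reals all_analysis.
From mathcomp Require Import lra ring.
Set Implicit Arguments. Unset Strict Implicit. Unset Printing Implicit Defensive.
Import Order.TTheory GRing.Theory Num.Theory.
Local Open Scope ring_scope.

(* Let F x := |x| psi (x / |x|) be the perspective of psi, where |x| is the
   coordinate sum.  F is positively homogeneous and, psi being convex, F is
   subadditive on the nonnegative orthant; condition (B2) says that F does not
   increase when a coordinate of a positive vector is set to 0.  If x' only
   raises the i-th coordinate of x > 0, then x is a convex combination of x'
   and of x' with its i-th coordinate zeroed, hence F x <= F x'; for strictly
   convex psi this is strict, since the two points have different
   normalisations.  Raising the coordinates of a to those of b one at a time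
   gives the theorem. *)

Section Normalize.
Variables (R : realType) (n : nat).
Implicit Types (u v x : 'rV[R]_n) (c : R) (i : 'I_n).

Definition mass x := \sum_(i < n) x ord0 i.

Definition normalize x := (mass x)^-1 *: x.

Definition zero_coord x i := \row_j (if j == i then 0 else x ord0 j).

Lemma massD u v : mass (u + v) = mass u + mass v.
Proof. by rewrite /mass -big_split; apply: eq_bigr => j _; rewrite mxE. Qed.

Lemma massZ c u : mass (c *: u) = c * mass u.
Proof. by rewrite /mass mulr_sumr; apply: eq_bigr => j _; rewrite mxE. Qed.

Lemma mass_zero_coord x i : mass (zero_coord x i) = mass x - x ord0 i.
Proof.
rewrite /mass (bigD1 i) //= [in RHS](bigD1 i) //= mxE eqxx add0r.
rewrite [x ord0 i + _]addrC addrK.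
by apply: eq_bigr => j /negbTE ji; rewrite mxE ji.
Qed.

Lemma normalizeZ c u : c != 0 -> normalize (c *: u) = normalize u.
Proof.
move=> c_neq0; rewrite /normalize massZ invfM mulrC -scalerA.
by rewrite [c^-1 *: _]scalerA mulVf // scale1r.
Qed.

Lemma normalizeD u v : 0 < mass u -> 0 < mass v ->
  normalize (u + v) = (mass u / mass (u + v)) *: normalize u
                      + (1 - mass u / mass (u + v)) *: normalize v.
Proof.
move=> mu_gt0 mv_gt0; apply/rowP => j; rewrite !mxE massD.
by field; rewrite !lt0r_neq0 ?addr_gt0.
Qed.

Lemma normalize_Omega x :
  (forall j, 0 <= x ord0 j) -> 0 < mass x -> Omega (normalize x).
Proof.
move=> x_ge0 mx_gt0; split=> [j|].
  by rewrite mxE; apply: mulr_ge0; [rewrite invr_ge0 ltW | exact: x_ge0].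
by under eq_bigr do rewrite mxE; rewrite -mulr_sumr mulVf ?lt0r_neq0.
Qed.

Lemma dropcoord_normalize x i : 0 < mass x -> x ord0 i < mass x ->
  dropcoord (normalize x) i = normalize (zero_coord x i).
Proof.
move=> mx_gt0 xi_lt; apply/rowP => j; rewrite !mxE mass_zero_coord.
case: eqVneq => _; first by rewrite mulr0.
by field; rewrite subr_eq0 !lt0r_neq0 ?gt_eqF.
Qed.

Hypothesis n_gt1 : (1 < n)%N.

Lemma exists_other_index i : exists j : 'I_n, j != i.
Proof.
pose i0 : 'I_n := Ordinal (ltnW n_gt1); pose i1 : 'I_n := Ordinal n_gt1.
case: (eqVneq i i0) => [->|]; last by exists i0; rewrite eq_sym.
by exists i1; apply/eqP => /(congr1 val).
Qed.

Lemma coord_lt_mass x i : (forall j, 0 < x ord0 j) -> x ord0 i < mass x.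
Proof.
move=> x_gt0; have [j ji] := exists_other_index i.
rewrite /mass (bigD1 i) //= ltrDl (bigD1 j) //= ltr_wpDr ?x_gt0 //.
by rewrite sumr_ge0 // => k _; rewrite ltW.
Qed.

Lemma mass_gt0 x : (forall j, 0 < x ord0 j) -> 0 < mass x.
Proof.
move=> x_gt0; pose i0 : 'I_n := Ordinal (ltnW n_gt1).
exact: lt_trans (x_gt0 i0) (coord_lt_mass i0 x_gt0).
Qed.

Lemma normalize_Omega_circ x :
  (forall j, 0 < x ord0 j) -> Omega_circ (normalize x).
Proof.
move=> x_gt0; split=> [|i].
  by apply: normalize_Omega; [move=> j; rewrite ltW | exact: mass_gt0].
by rewrite mxE ltr_pdivrMl ?mass_gt0 // mulr1 coord_lt_mass.
Qed.

End Normalize.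

Section Perspective.
Variables (R : realType) (n : nat) (psi : 'rV[R]_n -> R).
Implicit Types (u v x : 'rV[R]_n) (c : R).

Definition persp x := mass x * psi (normalize x).

Lemma perspZ c x : persp (c *: x) = c * persp x.
Proof.
rewrite /persp massZ -mulrA; have [->|c_neq0] := eqVneq c 0; first by rewrite !mul0r.
by rewrite normalizeZ.
Qed.

Section Subadditivity.
Variables u v : 'rV[R]_n.
Hypotheses (u_ge0 : forall j, 0 <= u ord0 j) (v_ge0 : forall j, 0 <= v ord0 j).
Hypotheses (mass_u_gt0 : 0 < mass u) (mass_v_gt0 : 0 < mass v).

Let Omega_nu : Omega (normalize u). Proof. exact: normalize_Omega. Qed.
Let Omega_nv : Omega (normalize v). Proof. exact: normalize_Omega. Qed.

Let mu := mass u / mass (u + v).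

Let mu_bounds : 0 < mu < 1.
Proof.
rewrite /mu massD divr_gt0 ?addr_gt0 //=.
by rewrite ltr_pdivrMr ?addr_gt0 // mul1r ltrDl.
Qed.

Let persp_add_split : persp (u + v) =
  mass (u + v) * psi (mu *: normalize u + (1 - mu) *: normalize v).
Proof. by rewrite /persp normalizeD. Qed.

Let persp_add_combine : persp u + persp v =
  mass (u + v) * (mu * psi (normalize u) + (1 - mu) * psi (normalize v)).
Proof. by rewrite /persp /mu massD; field; rewrite lt0r_neq0 ?addr_gt0. Qed.

Lemma persp_subadd :
  convex_on (@Omega R n) psi -> persp (u + v) <= persp u + persp v.
Proof.
move=> psi_convex; rewrite persp_add_split persp_add_combine.
rewrite ler_pM2l ?massD ?addr_gt0 //; apply: psi_convex => //.
by case/andP: mu_bounds => /ltW -> /ltW ->.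
Qed.

Lemma persp_subadd_strict : strictly_convex_on (@Omega R n) psi ->
  normalize u != normalize v -> persp (u + v) < persp u + persp v.
Proof.
move=> psi_sconvex nu_neq_nv; rewrite persp_add_split persp_add_combine.
by rewrite ltr_pM2l ?massD ?addr_gt0 //; exact: psi_sconvex.
Qed.

End Subadditivity.
End Perspective.

Section Monotonicity.
Variables (R : realType) (n : nat) (psi : 'rV[R]_n -> R).
Implicit Types (x : 'rV[R]_n) (i : 'I_n).
Hypothesis n_gt1 : (1 < n)%N.
Hypothesis psi_drop : forall t, Omega_circ t -> forall i,
  (1 - t ord0 i) * psi (dropcoord t i) <= psi t.

Lemma persp_zero_coord_le x i :
  (forall j, 0 < x ord0 j) -> persp psi (zero_coord x i) <= persp psi x.
Proof.
move=> x_gt0; have mx_gt0 := mass_gt0 n_gt1 x_gt0.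
have := psi_drop (normalize_Omega_circ n_gt1 x_gt0) i.
rewrite dropcoord_normalize ?coord_lt_mass // /persp => drop_le.
have -> : mass (zero_coord x i) = mass x * (1 - normalize x ord0 i).
  by rewrite mass_zero_coord mxE; field; rewrite lt0r_neq0.
by rewrite -mulrA ler_pM2l.
Qed.

Section RaiseCoord.
Variables (x x' : 'rV[R]_n) (i : 'I_n).
Hypotheses (x_gt0 : forall j, 0 < x ord0 j)
  (x'_eq : forall j, j != i -> x' ord0 j = x ord0 j)
  (x_lt_x' : x ord0 i < x' ord0 i).

Let x'_gt0 j : 0 < x' ord0 j.
Proof. by case: (eqVneq j i) => [->|/x'_eq ->] //; exact: lt_trans x_lt_x'. Qed.

Let y := zero_coord x' i.
Let l := 1 - x ord0 i / x' ord0 i.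

Let l_gt0 : 0 < l.
Proof. by rewrite /l subr_gt0 ltr_pdivrMr // mul1r. Qed.

Let l_lt1 : l < 1.
Proof. by rewrite /l ltrBlDr ltrDl divr_gt0. Qed.

Let l'_gt0 : 0 < 1 - l.
Proof. by rewrite subr_gt0. Qed.

Let x_decomp : x = l *: y + (1 - l) *: x'.
Proof.
apply/rowP => j; rewrite !mxE; case: (eqVneq j i) => [->|/x'_eq ->]; last by ring.
by rewrite /l; field; rewrite lt0r_neq0.
Qed.

Let ly_ge0 j : 0 <= (l *: y) ord0 j.
Proof. by rewrite !mxE; case: ifP => _; rewrite ?mulr0 // mulr_ge0 ?ltW. Qed.

Let l'x'_ge0 j : 0 <= ((1 - l) *: x') ord0 j.
Proof. by rewrite mxE mulr_ge0 ?ltW. Qed.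

Let mass_ly_gt0 : 0 < mass (l *: y).
Proof. by rewrite massZ mass_zero_coord mulr_gt0 // subr_gt0 coord_lt_mass. Qed.

Let mass_l'x'_gt0 : 0 < mass ((1 - l) *: x').
Proof. by rewrite massZ mulr_gt0 ?mass_gt0. Qed.

Let comb_le : l * persp psi y + (1 - l) * persp psi x' <= persp psi x'.
Proof.
have : l * persp psi y <= l * persp psi x'.
  by apply: ler_wpM2l; [exact: ltW | exact: persp_zero_coord_le].
lra.
Qed.

Lemma persp_raise_coord :
  convex_on (@Omega R n) psi -> persp psi x <= persp psi x'.
Proof.
move=> psi_convex; rewrite x_decomp; apply: le_trans comb_le.
by rewrite -!perspZ; exact: persp_subadd.
Qed.

Lemma persp_raise_coord_strict :
  strictly_convex_on (@Omega R n) psi -> persp psi x < persp psi x'.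
Proof.
move=> psi_sconvex; rewrite x_decomp; apply: lt_le_trans comb_le.
rewrite -!perspZ; apply: persp_subadd_strict => //.
rewrite !normalizeZ ?lt0r_neq0 //.
apply/eqP => /(congr1 (fun m : 'rV[R]_n => m ord0 i)); rewrite !mxE eqxx mulr0.
by apply/eqP; rewrite lt_eqF // mulr_gt0 ?invr_gt0 ?mass_gt0.
Qed.

End RaiseCoord.

Definition splice (a b : 'rV[R]_n) (k : nat) :=
  \row_j (if (j < k)%N then b ord0 j else a ord0 j).

Section Splice.
Variables a b : 'rV[R]_n.
Hypotheses (a_gt0 : forall i, 0 < a ord0 i)
  (a_le_b : forall i, a ord0 i <= b ord0 i).

Let splice0 : splice a b 0 = a.
Proof. by apply/rowP => j; rewrite mxE. Qed.

Let splice_ge k : (n <= k)%N -> splice a b k = b.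
Proof. by move=> n_le_k; apply/rowP => j; rewrite mxE (leq_trans (ltn_ord j)). Qed.

Let splice_gt0 k j : 0 < splice a b k ord0 j.
Proof. by rewrite mxE; case: ifP => _; rewrite ?(lt_le_trans (a_gt0 j)). Qed.

Let spliceS_off i j : j != i -> splice a b i.+1 ord0 j = splice a b i ord0 j.
Proof.
move=> j_neq_i; rewrite !mxE ltnS leq_eqVlt.
by have /negPf-> : nat_of_ord j != i by exact: contra j_neq_i => /eqP/val_inj->.
Qed.

Let spliceS_lt i : a ord0 i < b ord0 i ->
  splice a b i ord0 i < splice a b i.+1 ord0 i.
Proof. by rewrite !mxE ltnn ltnSn. Qed.

Let persp_splice_step k : convex_on (@Omega R n) psi ->
  persp psi (splice a b k) <= persp psi (splice a b k.+1).
Proof.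
move=> psi_convex; have [n_le_k | k_lt_n] := leqP n k.
  by rewrite !splice_ge ?leqW.
pose i := Ordinal k_lt_n; have [ab_eq | ab_neq] := eqVneq (a ord0 i) (b ord0 i).
  suff -> : splice a b k.+1 = splice a b k by [].
  apply/rowP => j; have [->|j_neq_i] := eqVneq j i.
    by rewrite !mxE ltnn ltnSn ab_eq.
  exact: (@spliceS_off i j j_neq_i).
have ab_lt : a ord0 i < b ord0 i by rewrite lt_neqAle ab_neq a_le_b.
exact: persp_raise_coord (splice_gt0 i) (@spliceS_off i) (spliceS_lt ab_lt)
  psi_convex.
Qed.

Let persp_splice_le k k' : convex_on (@Omega R n) psi -> (k <= k')%N ->
  persp psi (splice a b k) <= persp psi (splice a b k').
Proof.
move=> psi_convex.
apply: (@homo_leq _ (fun m => persp psi (splice a b m)) _ lexx le_trans) => m.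
exact: persp_splice_step.
Qed.

Lemma persp_mono : convex_on (@Omega R n) psi -> persp psi a <= persp psi b.
Proof.
move=> psi_convex; have := persp_splice_le psi_convex (leq0n n).
by rewrite splice0 splice_ge.
Qed.

Lemma persp_mono_strict : convex_on (@Omega R n) psi ->
  strictly_convex_on (@Omega R n) psi -> (exists i, a ord0 i < b ord0 i) ->
  persp psi a < persp psi b.
Proof.
move=> psi_convex psi_sconvex [i ab_lt].
have := persp_splice_le psi_convex (leq0n i); rewrite splice0 => a_le.
have := persp_splice_le psi_convex (ltn_ord i).
rewrite (splice_ge (leqnn n)) => le_b.
apply: le_lt_trans a_le (lt_le_trans _ le_b).
exact: persp_raise_coord_strict (splice_gt0 i) (@spliceS_off i) (spliceS_lt ab_lt)
  psi_sconvex.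
Qed.

End Splice.
End Monotonicity.

Theorem lemma2p8 (R : realType) (n : nat) (psi : 'rV[R]_n -> R)
  (a b : 'rV[R]_n) :
  (2 <= n)%N ->
  (forall i, 0 < a ord0 i) -> (forall i, a ord0 i <= b ord0 i) ->
  let alpha := \sum_(i < n) a ord0 i in
  let beta := \sum_(i < n) b ord0 i in
  (in_Psi psi ->
     alpha * psi (alpha^-1 *: a) <= beta * psi (beta^-1 *: b)) /\
  (in_Psi_sc psi -> (exists i, a ord0 i < b ord0 i) ->
     alpha * psi (alpha^-1 *: a) < beta * psi (beta^-1 *: b)).
Proof.
move=> n_gt1 a_gt0 a_le_b alpha beta; split.
  case=> psi_convex _ _ psi_drop.
  exact: (persp_mono n_gt1 psi_drop a_gt0 a_le_b psi_convex).
case=> -[psi_convex _ _ psi_drop] psi_sconvex.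
exact: (persp_mono_strict n_gt1 psi_drop a_gt0 a_le_b psi_convex psi_sconvex).
Qed.
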